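(* For every $\eta>0$ there exists $k_0=k_0(\eta)$ such that for all $k\ge k_0$ and $n\ge2k$ the following holds. Let $P\subseteq[n]$ with $\eta\le|P|/n\le1-\eta$, and let $M$ be a matching of size $k$ in the complete graph on $[n]$, chosen uniformly at random among all such matchings. Then with probability at least $\frac56$, the number of edges $uv\in M$ with $u\in P$ and $v\notin P$ is at least $\eta k/25$. *)

From HB Require Import structures.
From mathcomp Require Import all_boot all_order all_algebra.
From mathcomp Require Import reals.
Set Implicit Arguments. Unset Strict Implicit. Unset Printing Implicit Defensive.
Import Order.TTheory GRing.Theory Num.Theory.

Definition Kedge (n : nat) (e : {set 'I_n}) : bool := #|e| == 2.

Definition is_matching (n : nat) (M : {set {set 'I_n}}) : bool :=
  [forall e in M, Kedge e] &&
  [forall e1 in M, forall e2 in M, (e1 != e2) ==> [disjoint e1 & e2]].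

(* The (finite) set of all matchings of size k in K_n; the random matching
   is uniform on this set. *)
Definition matchings (n k : nat) : {set {set {set 'I_n}}} :=
  [set M | is_matching M && (#|M| == k)].

(* An edge uv with u in P and v not in P (i.e. exactly one endpoint in P). *)
Definition crossing (n : nat) (P : {set 'I_n}) (e : {set 'I_n}) : bool :=
  #|e :&: P| == 1.

Definition ncross (n : nat) (P : {set 'I_n}) (M : {set {set 'I_n}}) : nat :=
  #|[set e in M | crossing P e]|.

From HB Require Import structures.
From mathcomp Require Import all_boot all_order all_algebra.
From mathcomp Require Import reals.
From mathcomp Require Import fingroup perm action primitive_action alt.
From mathcomp Require Import zify ring lra.
Import Order.TTheory GRing.Theory Num.Theory.

Set Implicit Arguments. Unset Strict Implicit. Unset Printing Implicit Defensive.

(* Second-moment method.  Let X be the number of crossing edges of the random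
   k-matching and q the fraction of edges of K_n that cross, so q >= eta.
   Relabelling the vertices by a permutation preserves the uniform
   distribution, and permutations act transitively on edges and on ordered
   pairs of disjoint edges; hence E[X] = k q =: mu and
   E[X (X - 1)] <= k^2 q^2 'C(n, 2) / 'C(n - 2, 2) <= 27/25 mu^2 once n >= 54.
   So Var X <= mu + 2/25 mu^2, and as mu >= eta k >= 20 Chebyshev's inequality
   bounds Pr[X < eta k / 25] by (mu + 2/25 mu^2) / (24/25 mu)^2 < 1/6. *)

Lemma perm_map_uniq (T : finType) (s t : seq T) :
  uniq s -> uniq t -> size s = size t -> exists g : {perm T}, map g s = t.
Proof.
move=> us ut st.
have le_sT : size s <= #|T| by rewrite -(card_uniqP us) max_card.
have tr := ntransitive_weak le_sT (Sym_trans T).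
pose ts := in_tuple s; pose tt : (size s).-tuple T := Tuple (introT eqP (esym st)).
have [] := atransP2 tr (_ : ts \in _) (_ : tt \in _).
- by rewrite inE us; apply/subsetP.
- by rewrite inE ut; apply/subsetP.
by move=> g _ /(congr1 val) gst; exists g.
Qed.

Lemma imset_map_enum (T : finType) (g : T -> T) (A B : {set T}) :
  map g (enum A) = enum B -> g @: A = B.
Proof.
move=> gAB; apply/setP => y; transitivity (y \in enum B); last exact: mem_enum.
by rewrite -gAB; apply/imsetP/mapP => -[x xA ->]; exists x; rewrite ?mem_enum in xA *.
Qed.

Lemma perm_imset2_transitive (T : finType) (A B A' B' : {set T}) :
  #|A| = #|A'| -> #|B| = #|B'| -> [disjoint A & B] -> [disjoint A' & B'] ->
  exists g : {perm T}, g @: A = A' /\ g @: B = B'.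
Proof.
move=> AA' BB' dAB dAB'.
have uniq_enum2 (X Y : {set T}) : [disjoint X & Y] -> uniq (enum X ++ enum Y).
  move=> dXY; rewrite cat_uniq !enum_uniq andbT /=; apply/hasPn => y.
  by rewrite !mem_enum => Yy; apply: contraL dXY => Xy; apply/pred0Pn; exists y; apply/andP.
have [|g] := perm_map_uniq (uniq_enum2 _ _ dAB) (uniq_enum2 _ _ dAB').
  by rewrite !size_cat -!cardE AA' BB'.
rewrite map_cat => /eqP; rewrite eqseq_cat; last by rewrite size_map -!cardE.
by case/andP=> /eqP/imset_map_enum gA /eqP/imset_map_enum gB; exists g.
Qed.

Lemma perm_imset_transitive (T : finType) (A A' : {set T}) :
  #|A| = #|A'| -> exists g : {perm T}, g @: A = A'.
Proof.
move=> AA'; have d0 (X : {set T}) : [disjoint X & set0] by rewrite -setI_eq0 setI0.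
by have [g [gA _]] := perm_imset2_transitive AA' (erefl #|set0|) (d0 A) (d0 A'); exists g.
Qed.

Lemma card_set_sum (T : finType) (A : {pred T}) (P : pred T) :
  #|[set x in A | P x]| = \sum_(x in A) P x.
Proof.
by rewrite -sum1dep_card big_mkcondr; apply: eq_bigr => x _; case: (P x).
Qed.

Lemma double_count_transitive (I T : finType) (A : {set I}) (X : {set T})
    (r : I -> T -> bool) (c : pred I) :
  {in A &, forall i j, #|[set x in X | r i x]| = #|[set x in X | r j x]|} ->
  (\sum_(x in X) #|[set i in A | c i && r i x]|) * #|A| =
  #|[set i in A | c i]| * \sum_(x in X) #|[set i in A | r i x]|.
Proof.
move=> rA.
have exchange (b : pred I) : \sum_(x in X) #|[set i in A | b i && r i x]| =
    \sum_(i in A) b i * #|[set x in X | r i x]|.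
  rewrite (eq_bigr (fun x => \sum_(i in A) (b i && r i x))) => [|x _]; last first.
    exact: card_set_sum.
  rewrite exchange_big; apply: eq_bigr => i _; rewrite card_set_sum big_distrr.
  by apply: eq_bigr => x _; case: (b i); case: (r i x).
rewrite exchange (exchange predT) card_set_sum -sum1_card !big_distrl.
apply: eq_bigr => i iA; rewrite !big_distrr; apply: eq_bigr => j jA /=.
by rewrite muln1 mul1n (rA i j).
Qed.

Lemma card_offdiag (T : finType) (A : {set T}) :
  #|[set p in setX A A | p.1 != p.2]| = #|A| * #|A|.-1.
Proof.
have diag : #|setX A A :&: [set p | p.1 == p.2]| = #|A|.
  rewrite -[RHS](card_imset _ (fun x y (xy : (x, x) = (y, y)) => congr1 fst xy)).
  apply: eq_card => -[x y]; rewrite !inE /=.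
  apply/andP/imsetP => [[/andP[xA _] /eqP <-] | [z zA [-> ->]]]; first by exists x.
  by rewrite zA.
have := cardsID [set p | p.1 == p.2] (setX A A); rewrite diag cardsX setDE -setIdE.
rewrite -subn1 mulnBr muln1 => <-; rewrite addKn; apply: eq_card => p.
by rewrite !inE.
Qed.

Section Matchings.

Variable n : nat.
Implicit Types (e : {set 'I_n}) (M : {set {set 'I_n}}) (s : {perm 'I_n}).

Definition edges := [set e : {set 'I_n} | Kedge e].

Definition disjoint_edge_pairs :=
  [set p : {set 'I_n} * {set 'I_n} | [&& Kedge p.1, Kedge p.2 & [disjoint p.1 & p.2]]].

Lemma card_edges : #|edges| = 'C(n, 2).
Proof. by rewrite card_draws card_ord. Qed.

Lemma card_disjoint_edge_pairs : #|disjoint_edge_pairs| = 'C(n, 2) * 'C(n - 2, 2).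
Proof.
rewrite -sum1dep_card -(pair_big_dep (fun e1 => #|e1| == 2)
   (fun e1 e2 => (#|e2| == 2) && [disjoint e1 & e2]) (fun _ _ => 1)) /=.
rewrite (eq_bigr (fun _ => 'C(n - 2, 2))) => [|e1 /eqP e1_2].
  by rewrite sum_nat_const -card_edges cardsE.
have -> : n - 2 = #|~: e1| by have := cardsC e1; rewrite e1_2 card_ord; lia.
rewrite sum1dep_card -cards_draws; apply: eq_card => e2.
by rewrite !inE disjoint_sym disjoints_subset andbC.
Qed.

Lemma matching_edges k M : M \in matchings n k -> M \subset edges.
Proof.
rewrite inE => /andP[/andP[/forall_inP edgeM _] _].
by apply/subsetP => e /edgeM; rewrite inE.
Qed.

Lemma card_matching k M : M \in matchings n k -> #|M| = k.
Proof. by rewrite inE => /andP[_ /eqP]. Qed.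

Lemma matching_disjoint k M e1 e2 : M \in matchings n k ->
  e1 \in M -> e2 \in M -> e1 != e2 -> [disjoint e1 & e2].
Proof.
rewrite inE => /andP[/andP[_ /forall_inP djM] _] e1M e2M.
by move: (djM e1 e1M) => /forall_inP /(_ e2 e2M) /implyP.
Qed.

Definition relabel s M := (fun e => s @: e) @: M.

Lemma relabel_inj s : injective (relabel s).
Proof. by apply/imset_inj/imset_inj/perm_inj. Qed.

Lemma relabelKV s : cancel (relabel s^-1) (relabel s).
Proof.
move=> M; rewrite /relabel -imset_comp -[RHS]imset_id; apply: eq_imset => e /=.
by rewrite -imset_comp -[RHS]imset_id; apply: eq_imset => x; rewrite /= permKV.
Qed.

Lemma mem_relabel s M e : (s @: e \in relabel s M) = (e \in M).
Proof. by rewrite mem_imset //; apply/imset_inj/perm_inj. Qed.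

Lemma relabel_matching k s M : M \in matchings n k -> relabel s M \in matchings n k.
Proof.
move=> Mk; have s_inj : injective (fun e => s @: e) by apply/imset_inj/perm_inj.
rewrite inE card_imset // (card_matching Mk) eqxx andbT.
apply/andP; split; apply/forall_inP => _ /imsetP[e1 e1M ->].
  have := subsetP (matching_edges Mk) e1 e1M.
  by rewrite inE /Kedge card_imset //; apply: perm_inj.
apply/forall_inP => _ /imsetP[e2 e2M ->]; apply/implyP => ne12.
have ne : e1 != e2 by apply: contra ne12 => /eqP ->.
rewrite -setI_eq0 -imsetI; last by move=> x y _ _; apply: perm_inj.
by rewrite imset_eq0 setI_eq0 (matching_disjoint Mk).
Qed.

Lemma card_matchings_relabel k s (Q : pred {set {set 'I_n}}) :
  #|[set M in matchings n k | Q (relabel s M)]| = #|[set M in matchings n k | Q M]|.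
Proof.
rewrite -(card_imset _ (@relabel_inj s)); apply: eq_card => M'; rewrite [RHS]inE.
apply/imsetP/andP => [[M + ->] | [M'k QM']].
  by rewrite inE => /andP[Mk QsM]; rewrite relabel_matching.
exists (relabel s^-1 M'); last by rewrite relabelKV.
by rewrite inE relabel_matching //= relabelKV.
Qed.

Lemma card_matchings_containing_edge k :
  {in edges &, forall e e',
    #|[set M in matchings n k | e \in M]| = #|[set M in matchings n k | e' \in M]|}.
Proof.
move=> e e'; rewrite !inE /Kedge => /eqP e_2 /eqP e'_2.
have [s <-] := perm_imset_transitive (etrans e_2 (esym e'_2)).
by rewrite -[RHS](card_matchings_relabel k s); apply: eq_card => M; rewrite !inE mem_relabel.
Qed.

Lemma card_matchings_containing_pair k :
  {in disjoint_edge_pairs &, forall p p',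
    #|[set M in matchings n k | (p.1 \in M) && (p.2 \in M)]| =
    #|[set M in matchings n k | (p'.1 \in M) && (p'.2 \in M)]|}.
Proof.
move=> [e1 e2] [e1' e2']; rewrite !inE /Kedge /=.
move=> /and3P[/eqP e1_2 /eqP e2_2 d12] /and3P[/eqP e1'_2 /eqP e2'_2 d12'].
have [s [<- <-]] := perm_imset2_transitive (etrans e1_2 (esym e1'_2))
  (etrans e2_2 (esym e2'_2)) d12 d12'.
by rewrite -[RHS](card_matchings_relabel k s); apply: eq_card => M; rewrite !inE !mem_relabel.
Qed.

Lemma card_matching_edges k M (b : pred {set 'I_n}) : M \in matchings n k ->
  #|[set e in M | b e]| = #|[set e in edges | b e && (e \in M)]|.
Proof.
move=> Mk; apply: eq_card => e; have := subsetP (matching_edges Mk) e.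
by rewrite !inE; case: (e \in M) => [/(_ isT) -> | _]; rewrite ?andbT ?andbF.
Qed.

Lemma matching_edge_pairs k M (b : pred {set 'I_n}) : M \in matchings n k ->
  [set p in disjoint_edge_pairs | (b p.1 && b p.2) && ((p.1 \in M) && (p.2 \in M))] =
  [set p in setX [set e in M | b e] [set e in M | b e] | p.1 != p.2].
Proof.
move=> Mk; apply/setP => -[e1 e2]; rewrite !inE /=.
case e1M: (e1 \in M); case e2M: (e2 \in M); rewrite ?andbF ?andFb //=.
have edgeM e : e \in M -> Kedge e by move/(subsetP (matching_edges Mk)); rewrite inE.
rewrite edgeM // edgeM //= andbT andbC; congr (_ && _).
apply/idP/idP => [d12 | ]; last exact: matching_disjoint Mk e1M e2M.
by apply: contraTneq d12 => <-; rewrite -setI_eq0 setIid -card_gt0 (eqP (edgeM _ e1M)).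
Qed.

Lemma sum_card_matching_edges k (c : pred {set 'I_n}) :
  (\sum_(M in matchings n k) #|[set e in M | c e]|) * 'C(n, 2) =
  #|[set e in edges | c e]| * (k * #|matchings n k|).
Proof.
rewrite -card_edges (eq_bigr _ (fun M Mk => card_matching_edges c Mk)).
rewrite (double_count_transitive (r := fun e M => e \in M) c
  (card_matchings_containing_edge k)).
congr (_ * _); rewrite mulnC -sum_nat_const; apply: eq_bigr => M Mk.
rewrite -(card_matching Mk); apply: eq_card => e.
by rewrite inE andb_idl // => /(subsetP (matching_edges Mk)).
Qed.

Lemma sum_card_matching_edge_pairs k (c : pred {set 'I_n}) :
  (\sum_(M in matchings n k) #|[set e in M | c e]| * #|[set e in M | c e]|.-1) *
    ('C(n, 2) * 'C(n - 2, 2)) =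
  #|[set p in disjoint_edge_pairs | c p.1 && c p.2]| * (k * k.-1 * #|matchings n k|).
Proof.
rewrite -card_disjoint_edge_pairs (eq_bigr (fun M => #|[set p in disjoint_edge_pairs |
  (c p.1 && c p.2) && ((p.1 \in M) && (p.2 \in M))]|)) => [|M Mk]; last first.
  by rewrite (matching_edge_pairs c Mk) card_offdiag.
rewrite (double_count_transitive (r := fun p M => (p.1 \in M) && (p.2 \in M))
  (fun p => c p.1 && c p.2) (card_matchings_containing_pair k)).
congr (_ * _); rewrite mulnC -sum_nat_const; apply: eq_bigr => M Mk.
have MT : [set e in M | predT e] = M by apply/setP => e; rewrite inE andbT.
rewrite -(card_matching Mk) -[in RHS]MT -card_offdiag -(matching_edge_pairs predT Mk).
by apply: eq_card => p; rewrite !inE.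
Qed.

Lemma card_crossing_edges_ge (P : {set 'I_n}) :
  #|P| * #|~: P| <= #|[set e in edges | crossing P e]|.
Proof.
have meetP x y : x \in P -> y \notin P -> [set x; y] :&: P = [set x].
  move=> xP yP; apply/setP => z; rewrite !inE.
  case: (z =P x) => [-> | _]; first by rewrite xP.
  by case: (z =P y) => [-> | _]; rewrite ?(negbTE yP).
have diffP x y : x \in P -> y \notin P -> [set x; y] :\: P = [set y].
  move=> xP yP; apply/setP => z; rewrite !inE.
  case: (z =P y) => [-> | _]; first by rewrite yP orbT.
  by case: (z =P x) => [-> | _]; rewrite ?xP ?andbF.
pose edge (p : 'I_n * 'I_n) := [set p.1; p.2].
have edge_inj : {in setX P (~: P) &, injective edge}.
  move=> [u v] [u' v']; rewrite !inE /= => /andP[uP vP] /andP[u'P v'P] euv.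
  rewrite /edge /= in euv.
  have /set1_inj <- : [set u] = [set u'] by rewrite -(meetP u v) // euv meetP.
  by have /set1_inj <- : [set v] = [set v'] by rewrite -(diffP u v) // euv diffP.
rewrite -cardsX -(card_in_imset edge_inj); apply/subset_leq_card/subsetP => e.
case/imsetP=> -[x y]; rewrite !inE /= => /andP[xP yP] ->.
have xy : x != y by apply: contraNneq yP => <-.
by rewrite /Kedge /crossing /edge /= cards2 xy meetP // cards1.
Qed.

Lemma card_disjoint_edge_pairs_le (c : pred {set 'I_n}) :
  #|[set p in disjoint_edge_pairs | c p.1 && c p.2]| <= #|[set e in edges | c e]| ^ 2.
Proof.
rewrite -mulnn -cardsX; apply/subset_leq_card/subsetP => -[e1 e2].
by rewrite !inE /= => /andP[/and3P[-> -> _] /andP[-> ->]].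
Qed.

End Matchings.

Lemma bin2_double n : 2 * 'C(n, 2) = n * n.-1.
Proof. by rewrite -mul_bin_diag bin1. Qed.

Lemma bin2_le_bin2_sub2 n : 54 <= n -> 25 * 'C(n, 2) <= 27 * 'C(n - 2, 2).
Proof. by move=> n_ge; have := bin2_double n; have := bin2_double (n - 2); nia. Qed.

Local Open Scope ring_scope.

Lemma chebyshev_count (R : realFieldType) (T : finType) (A : {set T}) (f : T -> R)
    (mu t : R) :
  \sum_(x in A) f x = #|A|%:R * mu -> t <= mu ->
  #|[set x in A | f x < t]|%:R * (mu - t) ^+ 2 <= \sum_(x in A) f x ^+ 2 - #|A|%:R * mu ^+ 2.
Proof.
move=> sum_f t_le_mu.
have -> : \sum_(x in A) f x ^+ 2 - #|A|%:R * mu ^+ 2 = \sum_(x in A) (f x - mu) ^+ 2.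
  under [RHS]eq_bigr do rewrite sqrrB.
  rewrite big_split sumrB /= sumrMnl -mulr_suml sum_f sumr_const -mulr_natr; ring.
rewrite card_set_sum natr_sum mulr_suml; apply: ler_sum => x _.
by have [ft | tf] := ltP (f x) t; rewrite ?mul1r ?mul0r ?sqr_ge0 //; nra.
Qed.

Lemma card_set_le_lt (R : realDomainType) (T : finType) (A : {set T}) (f : T -> R) (t : R) :
  (#|[set x in A | (t <= f x)%R]| + #|[set x in A | (f x < t)%R]|)%N = #|A|.
Proof.
rewrite !card_set_sum -big_split -sum1_card; apply: eq_bigr => x _ /=.
by case: leP.
Qed.

Lemma tail_count_le_sixth (R : realFieldType) (m b mu t : R) :
  20 <= mu -> 25 * t <= mu -> 0 <= b ->
  b * (mu - t) ^+ 2 <= m * mu + 2 / 25 * m * mu ^+ 2 -> 6 * b <= m.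
Proof.
move=> mu_ge t_le b_ge0 tail.
have sq : b * (576 / 625 * mu ^+ 2) <= b * (mu - t) ^+ 2.
  by apply: ler_wpM2l => //; nra.
have lin : b * (576 / 625 * mu) <= m * (1 + 2 / 25 * mu).
  rewrite -(ler_pM2r (_ : 0 < mu)); last lra.
  by have := le_trans sq tail; rewrite expr2; lra.
have : 6 * b * (1 + 2 / 25 * mu) <= m * (1 + 2 / 25 * mu) by nra.
by rewrite ler_pM2r //; lra.
Qed.

Lemma second_moment_concentration (R : realFieldType) (T : finType) (A : {set T})
    (f : T -> R) (mu t : R) :
  \sum_(x in A) f x = #|A|%:R * mu ->
  \sum_(x in A) f x ^+ 2 <= #|A|%:R * mu + 27 / 25 * #|A|%:R * mu ^+ 2 ->
  20 <= mu -> 25 * t <= mu ->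
  5 / 6 * #|A|%:R <= #|[set x in A | t <= f x]|%:R :> R.
Proof.
move=> sum_f sum_f2 mu_ge t_le.
have t_le_mu : t <= mu by lra.
have six : 6 * #|[set x in A | f x < t]|%:R <= #|A|%:R :> R.
  apply: tail_count_le_sixth mu_ge t_le (ler0n _ _) _.
  by apply: le_trans (chebyshev_count sum_f t_le_mu) _; lra.
have := card_set_le_lt A f t; move/(congr1 (fun x => x%:R : R)); rewrite natrD.
lra.
Qed.

(* Each edge lies in a uniform k-matching with probability k / 'C(n, 2). *)
Definition expected_count (R : numFieldType) n k (c : pred {set 'I_n}) : R :=
  k%:R * #|[set e in edges n | c e]|%:R / 'C(n, 2)%:R.

Lemma sum_card_matching_edgesE (R : numFieldType) n k (c : pred {set 'I_n}) :
  (1 < n)%N ->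
  \sum_(M in matchings n k) #|[set e in M | c e]|%:R =
  #|matchings n k|%:R * expected_count R k c :> R.
Proof.
move=> n_gt1; have E_neq0 : 'C(n, 2)%:R != 0 :> R by rewrite pnatr_eq0 -lt0n bin_gt0.
apply: (mulIf E_neq0); rewrite -natr_sum -natrM sum_card_matching_edges natrM.
by rewrite /expected_count mulrA divfK // natrM; ring.
Qed.

Lemma sum_card_matching_edges_sq_le (R : realFieldType) n k (c : pred {set 'I_n}) :
  (54 <= n)%N ->
  \sum_(M in matchings n k) #|[set e in M | c e]|%:R ^+ 2 <=
  #|matchings n k|%:R * expected_count R k c +
    27 / 25 * #|matchings n k|%:R * expected_count R k c ^+ 2.
Proof.
move=> n_ge; set m : R := #|matchings n k|%:R; set mu := expected_count R k c.
pose F (M : {set {set 'I_n}}) := #|[set e in M | c e]|; set X1 := #|[set e in edges n | c e]|.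
set E : R := 'C(n, 2)%:R; set C : R := 'C(n - 2, 2)%:R.
have E_gt0 : 0 < E by rewrite ltr0n bin_gt0; lia.
have C_gt0 : 0 < C by rewrite ltr0n bin_gt0; lia.
have EC : 25 * E <= 27 * C by have := bin2_le_bin2_sub2 n_ge; rewrite -(ler_nat R) !natrM.
have pairs : (\sum_(M in matchings n k) (F M * (F M).-1)%:R) * (E * C) <= (X1 * k)%:R ^+ 2 * m.
  rewrite /m -natr_sum -natrX -!natrM ler_nat sum_card_matching_edge_pairs mulnA expnMn.
  rewrite leq_mul2r leq_mul ?orbT ?card_disjoint_edge_pairs_le //.
  by rewrite -mulnn leq_mul2l leq_pred orbT.
have -> : \sum_(M in matchings n k) (F M)%:R ^+ 2 =
    \sum_(M in matchings n k) (F M)%:R + \sum_(M in matchings n k) (F M * (F M).-1)%:R :> R.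
  rewrite -big_split; apply: eq_bigr => M _ /=; rewrite -natrX -natrD; congr _%:R.
  by case: (F M) => // f; nia.
rewrite sum_card_matching_edgesE ?(leq_trans _ n_ge) // lerD2l.
set S := \sum_(M in _) _ in pairs *.
have mu_E : mu * E = (X1 * k)%:R by rewrite /mu /expected_count divfK ?gt_eqF // natrM mulrC.
have SC : S * C <= mu ^+ 2 * E * m.
  by rewrite -(ler_pM2r E_gt0); move: pairs; rewrite -mu_E; lra.
have mu2m : 0 <= mu ^+ 2 * m by rewrite mulr_ge0 ?sqr_ge0 ?ler0n.
by rewrite -(ler_pM2r C_gt0); nra.
Qed.

Lemma crossing_edges_density (R : realFieldType) n (P : {set 'I_n}) (eta : R) :
  0 < eta -> eta <= #|P|%:R / n%:R <= 1 - eta ->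
  eta * 'C(n, 2)%:R <= #|[set e in edges n | crossing P e]|%:R.
Proof.
move=> eta_gt0 /andP[lo hi].
have n_gt0 : (0 < n)%N.
  rewrite lt0n; apply: contraTneq lo => /(congr1 (fun m => m%:R : R)) n0.
  by rewrite n0 invr0 mulr0 -ltNge.
have N_gt0 : 0 < n%:R :> R by rewrite ltr0n.
set a : R := #|P|%:R; set b : R := #|~: P|%:R.
have ab : a + b = n%:R by rewrite -natrD cardsC card_ord.
have E2 : 2 * 'C(n, 2)%:R = n%:R * (n%:R - 1) :> R.
  by have := congr1 (fun x => x%:R : R) (bin2_double n); rewrite /= !natrM -subn1 natrB.
have lo' : eta * n%:R <= a by rewrite -ler_pdivlMr.
have hi' : a <= (1 - eta) * n%:R by rewrite -ler_pdivrMr.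
have cross : a * b <= #|[set e in edges n | crossing P e]|%:R.
  by rewrite -natrM ler_nat card_crossing_edges_ge.
have eta_half : eta <= 1 / 2 by nra.
have : eta * (1 - eta) * n%:R * n%:R <= a * b by nra.
nra.
Qed.

Theorem lemma2p11 (R : realType) (eta : R) :
  0 < eta ->
  exists k0 : nat, forall k n : nat, (k0 <= k)%N -> (2 * k <= n)%N ->
    forall P : {set 'I_n},
      eta <= (#|P|%:R / n%:R) <= 1 - eta ->
      (* Pr[ncross P M >= eta k / 25] >= 5/6, M uniform over k-matchings *)
      (5 / 6 : R) * (#|matchings n k|%:R) <=
        (#|[set M in matchings n k | eta * k%:R / 25 <= (ncross P M)%:R]|%:R).
Proof.
move=> eta_gt0; exists (maxn 27 (Num.bound (20 / eta))) => k n.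
rewrite geq_max => /andP[k_ge27 k_ge_bound] n_ge P etaP.
have n_ge54 : (54 <= n)%N by lia.
have k_eta : 20 <= eta * k%:R.
  rewrite mulrC -ler_pdivrMr //; apply/ltW/(lt_le_trans (archi_boundP _)).
    by rewrite divr_ge0 ?ltW.
  by rewrite ler_nat.
have mu_ge : eta * k%:R <= expected_count R k (crossing P).
  have E_gt0 : 0 < 'C(n, 2)%:R :> R by rewrite ltr0n bin_gt0; lia.
  have := crossing_edges_density eta_gt0 etaP.
  by rewrite /expected_count ler_pdivlMr // -mulrA mulrCA => /ler_wpM2l; apply.
apply: (@second_moment_concentration _ _ _ (fun M => (ncross P M)%:R)
  (expected_count R k (crossing P))); last by lra.
- by apply: sum_card_matching_edgesE; lia.
- exact: sum_card_matching_edges_sq_le.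
- lra.
Qed.
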